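(* Let $\mathcal M_{A,B,\partial_0}$ be an $M$-pair. The partitions $B=P\sqcup Q\sqcup R$ and $A\setminus B=X\sqcup Y\sqcup Z$, the bijections $Q\to R$ and $Y\to Z$, the subset $H=H(\partial_0)\subset P$, and the injection $h_+:H\to X$ (which is well defined) depend only on the $(A,B)$-equivalence class of $\partial_0$; i.e. they are invariants of the $M$-pair up to isomorphism.
   Context: $\mathbb E$ is a field; $A=\{a_1\prec\dots\prec a_N\}$ a finite linearly ordered graded set, $\mathbb E(A)$ the graded vector space with basis $A$. An $M$-differential: degree $-1$, $\partial^2=0$, $\partial(a_i)\in\mathrm{span}\{a_1,\dots,a_{i-1}\}$; for $B\subset A$ with $\partial\mathbb E(B)\subset\mathbb E(B)$ it is an $M_{A,B}$-differential and $\mathcal M_{A,B,\partial}$ an $M$-pair; $\partial_B$ is the restriction to $\mathbb E(B)$ and $\partial_{A\setminus B}$ the induced differential on $\mathbb E(A)/\mathbb E(B)\cong\mathbb E(A\setminus B)$. $(A,B)$-equivalence: conjugation by a graded automorphism preserving each $\mathrm{span}\{a_1,\dots,a_i\}$ and $\mathbb E(B)$. Elementary $M$-differential: each basis element goes to $0$ or to one basis element, no two basis elements to the same one. Every $M_{A,B}$-differential $\partial_0$ is $(A,B)$-equivalent to some $\partial$ with $\partial_B$, $\partial_{A\setminus B}$ elementary; for such $\partial$: $Q=\{b\in B:\partial_B b\ne0\}$, $R=\partial_B(Q)$, $P=B\setminus(Q\cup R)$, with bijection $\partial_B:Q\to R$; $Y=\{a\in A\setminus B:\partial_{A\setminus B}a\ne0\}$,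 $Z=\partial_{A\setminus B}(Y)$, $X$ the rest, with bijection $\partial_{A\setminus B}:Y\to Z$. Quasi-elementary: $\partial_B,\partial_{A\setminus B}$ elementary, each $\partial(x)$ ($x\in X$) contains (has nonzero coefficient on) at most one element of $P$, with coefficient $1$, and each element of $P$ appears in at most one $\partial(x)$, $x\in X$; every $M_{A,B}$-differential is $(A,B)$-equivalent to a quasi-elementary one. $H(\partial_0)$ is the set of $\partial_0$-boundary homologically essential elements: with $B=\{b_1\prec\dots\prec b_K\}$, $I_k=\iota_*H_*(\mathbb E(\{b_1,\dots,b_k\}),\partial_B)\cap\partial_*H_*(\mathbb E(A),\mathbb E(B),\partial_0)\subset H_*(\mathbb E(B),\partial_B)$ ($\iota_*$ induced by inclusion, $\partial_*$ the connecting homomorphism), $I_0=0$, and $b_k\in H(\partial_0)$ iff $I_k\ne I_{k-1}$. The map $h_+:H\to X$ sends $b$ to the element $x\in X$ such that $\partial'(x)$ contains $b$, where $\partial'$ is a quasi-elementary differential $(A,B)$-equivalent to $\partial_0$. *)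

From HB Require Import structures.
From mathcomp Require Import all_boot all_order all_algebra.
Set Implicit Arguments. Unset Strict Implicit. Unset Printing Implicit Defensive.
Import GRing.Theory.
Local Open Scope ring_scope.

(* A = {a_1 < ... < a_N} is modelled by 'I_N with its natural order;
   deg : 'I_N -> int is the grading; B : {set 'I_N}.
   Vectors of E(A) are row vectors 'rV[E]_N (coordinates in the basis A);
   an endomorphism is a matrix D : 'M[E]_N acting on the right, v |-> v *m D,
   so row i of D is the image of a_i and  D i j  is the coefficient of a_j
   in the image of a_i. *)

Section Defs.
Variables (E : fieldType) (N : nat).
Implicit Types (deg : 'I_N -> int) (B S : {set 'I_N}) (D : 'M[E]_N).

Definition MAB_diff deg B D : Prop :=
  [/\ (forall i j, D i j != 0 -> deg j = deg i - 1),
      D *m D = 0,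
      (forall i j, D i j != 0 -> (j < i)%N) &
      (forall i j, i \in B -> D i j != 0 -> j \in B)].

(* (A,B)-equivalence: conjugation by a graded automorphism g preserving each
   span{a_1..a_i} and E(B). *)
Definition AB_equiv deg B D D' : Prop :=
  exists g : 'M[E]_N,
    [/\ g \in unitmx,
        (forall i j, g i j != 0 -> (j <= i)%N),
        (forall i j, g i j != 0 -> deg j = deg i),
        (forall i j, i \in B -> g i j != 0 -> j \in B) &
        D' = invmx g *m D *m g].

(* The matrix D, restricted/induced on the span of S (S = B gives partial_B,
   S = A \ B gives the induced differential on E(A)/E(B) = E(A \ B)),
   is elementary: each basis element goes to 0 or to exactly one basis
   element, and no two basis elements go to the same one. *)
Definition elem_on S D : Prop :=
  (forall i, i \in S ->
     (forall j, j \in S -> D i j = 0) \/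
     (exists j, [/\ j \in S, D i j = 1 & (forall k, k \in S -> k != j -> D i k = 0)]))
  /\ (forall i i' j, i \in S -> i' \in S -> j \in S ->
        D i j != 0 -> D i' j != 0 -> i = i').

Definition elem_restr B D : Prop := elem_on B D /\ elem_on (~: B) D.

Definition Qset B D := [set i in B | [exists j in B, D i j != 0]].
Definition Rset B D := [set j in B | [exists i in B, D i j != 0]].
Definition Pset B D := B :\: (Qset B D :|: Rset B D).
Definition Yset B D := [set i in ~: B | [exists j in ~: B, D i j != 0]].
Definition Zset B D := [set j in ~: B | [exists i in ~: B, D i j != 0]].
Definition Xset B D := (~: B) :\: (Yset B D :|: Zset B D).

Definition bijQR B D (q r : 'I_N) : bool := [&& q \in B, r \in B & D q r != 0].
Definition bijYZ B D (y z : 'I_N) : bool := [&& y \notin B, z \notin B & D y z != 0].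

Definition quasi_elem B D : Prop :=
  [/\ elem_restr B D,
      (forall x p, x \in Xset B D -> p \in Pset B D -> D x p != 0 -> D x p = 1),
      (forall x p p', x \in Xset B D -> p \in Pset B D -> p' \in Pset B D ->
          D x p != 0 -> D x p' != 0 -> p = p') &
      (forall x x' p, x \in Xset B D -> x' \in Xset B D -> p \in Pset B D ->
          D x p != 0 -> D x' p != 0 -> x = x')].

(* Homology.  Subspaces are row spaces of matrices (mxalgebra).
   EB S = E(S) (span of the basis elements in S). *)
Definition EB S : 'M[E]_N := \matrix_(i, j) ((i == j) && (i \in S))%:R.

(* A subspace of H_*(E(B), partial_B) = Zc/Bd is represented by its preimage in
   the cycle space Zc (a subspace of E(B) containing Bd).
   - cycles Zc = ker D :&: E(B), boundaries Bd = image of E(B) under D;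
   - iota_* H(E(S)) (S subset B) has preimage (ker D :&: E(S)) + Bd;
   - the image of the connecting map d_* : H(E(A),E(B)) -> H(E(B)) has
     preimage { D c | c in E(A), D c in E(B) } = im D :&: E(B).
   Preimage of an intersection = intersection of preimages. *)
Definition Ipre B D S : 'M[E]_N :=
  (((kermx D :&: EB S) + EB B *m D) :&: (D :&: EB B))%MS.

(* b_k in H iff I_k <> I_{k-1}, where {b_1..b_k} = {b' in B | b' <= b_k}. *)
Definition H_ess B D : {set 'I_N} :=
  [set b in B | ~~ (Ipre B D [set b' in B | (b' <= b)%N]
                    == Ipre B D [set b' in B | (b' < b)%N])%MS].

Definition hplus_rel B D (b x : 'I_N) : bool := (x \in Xset B D) && (D x b != 0).

End Defs.

From HB Require Import structures.
From mathcomp Require Import all_boot all_order all_algebra.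
Set Implicit Arguments. Unset Strict Implicit. Unset Printing Implicit Defensive.
Import GRing.Theory.
Local Open Scope ring_scope.

(* Every invariant below is read off from inclusions between subspaces built
   from the coordinate subspaces E(S), the kernel and the image of the
   differential, for sets S that are flag-closed, i.e. whose span is stable
   under every automorphism allowed in an (A,B)-equivalence.  Conjugating the
   differential by such an automorphism g maps each of these subspaces to its
   image under g, so the inclusions do not change.

   For a differential whose restrictions are elementary, such inclusions test
   whether row i meets the columns l >= j of B, resp. of A \ B.  A row with at
   most one nonzero entry is determined by these tests, so the supports on
   B x B and (A \ B) x (A \ B), hence P, Q, R, X, Y, Z and both bijections,
   are invariants.  For a quasi-elementary differential the same argument,
   applied to the rows of X restricted to the columns of P, shows that h_+ is
   an invariant.

   H lies in P because a cycle of E(b_1..b_k) has no b_k-coordinate when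
   b_k is in Q, while b_k is itself a boundary when it is in R.  h_+ is
   defined on H because a boundary in E(B) can reach b in P only through X:
   rows of Z vanish on P, and a chain whose boundary lies in E(B) has zero
   coefficient on each y in Y, this being the coefficient of the boundary on
   the partner of y in Z. *)

Section CoordinateSubspaces.
Variables (E : fieldType) (N : nat).
Implicit Types (S T : {set 'I_N}).

Lemma mulEBl n S (M : 'M[E]_(N, n)) i j :
  (EB E S *m M) i j = if i \in S then M i j else 0.
Proof.
rewrite mxE (bigD1 i) //= big1 ?addr0 => [|k /negbTE ki]; last first.
  by rewrite mxE eq_sym ki mul0r.
by rewrite mxE eqxx; case: (i \in S); rewrite ?mul1r ?mul0r.
Qed.

Lemma mulEBr m S (M : 'M[E]_(m, N)) i j :
  (M *m EB E S) i j = if j \in S then M i j else 0.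
Proof.
rewrite mxE (bigD1 j) //= big1 ?addr0 => [|k /negbTE kj]; last first.
  by rewrite mxE kj mulr0.
by rewrite mxE eqxx; case: (j \in S); rewrite ?mulr1 ?mulr0.
Qed.

Lemma sub_EBP m S (A : 'M[E]_(m, N)) :
  reflect (forall k l, l \notin S -> A k l = 0) (A <= EB E S)%MS.
Proof.
apply: (iffP idP) => [/submxP[X ->] k l lS | A0].
  by rewrite mulEBr (negbTE lS).
suff -> : A = A *m EB E S by apply: submxMl.
by apply/matrixP => k l; rewrite mulEBr; case: ifPn => // /A0 ->.
Qed.

Lemma sub_EB_setC1P m (A : 'M[E]_(m, N)) l :
  reflect (forall k, A k l = 0) (A <= EB E [set~ l])%MS.
Proof.
apply: (iffP (sub_EBP _ _)) => [A0 k | A0 k l']; first by apply: A0; rewrite !inE eqxx.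
by rewrite !inE negbK => /eqP ->.
Qed.

Lemma EBS S T : S \subset T -> (EB E S <= EB E T)%MS.
Proof.
move/subsetP => sST; apply/sub_EBP => k l lT; rewrite mxE.
by case: eqP => [->|]; rewrite ?andbF //= (contraNF (sST l)).
Qed.

Lemma rowEB S k : row k (EB E S) = if k \in S then 'e_k else 0.
Proof.
by apply/rowP => j; case: ifP => kS; rewrite !mxE ?kS ?andbT ?andbF // eq_sym.
Qed.

Lemma stable_EBP S (M : 'M[E]_N) :
  reflect (forall i j, i \in S -> M i j != 0 -> j \in S) (EB E S *m M <= EB E S)%MS.
Proof.
apply: (iffP (sub_EBP _ _)) => [M0 i j iS | MS i j jS].
  move=> nz; apply: contraT => jS; have := M0 i j jS; rewrite mulEBl iS => M0ij.
  by rewrite M0ij eqxx in nz.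
by rewrite mulEBl; case: ifP => // iS; apply/eqP; apply: contraNT jS; apply: MS.
Qed.

End CoordinateSubspaces.

Section FlagClosed.
Variables (N : nat) (B : {set 'I_N}).

Definition flag_closed (S : {set 'I_N}) :=
  forall k l : 'I_N, k \in S -> (l <= k)%N -> (k \in B -> l \in B) -> l \in S.

Lemma flag_closedB : flag_closed B.
Proof. by move=> k l kB _; apply. Qed.

Lemma flag_closed_lt n : flag_closed [set l : 'I_N | (l < n)%N].
Proof. by move=> k l; rewrite !inE => kn lk _; apply: leq_ltn_trans kn. Qed.

Lemma flag_closed_le n : flag_closed [set l : 'I_N | (l <= n)%N].
Proof. by move=> k l; rewrite !inE => kn lk _; apply: leq_trans kn. Qed.

Lemma flag_closedU S T : flag_closed S -> flag_closed T -> flag_closed (S :|: T).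
Proof.
move=> cS cT k l /setUP[kS|kT] lk kB; apply/setUP; first by left; apply: cS kS lk kB.
by right; apply: cT kT lk kB.
Qed.

Lemma flag_closed_Blt n : flag_closed [set l in B | (l < n)%N].
Proof. by move=> k l; rewrite !inE => /andP[kB kn] lk /(_ kB) ->; apply: leq_ltn_trans kn. Qed.

Lemma flag_closed_Ble n : flag_closed [set l in B | (l <= n)%N].
Proof. by move=> k l; rewrite !inE => /andP[kB kn] lk /(_ kB) ->; apply: leq_trans kn. Qed.

End FlagClosed.

Arguments flag_closedB {N B}.
Arguments flag_closed_lt {N B} n.
Arguments flag_closed_le {N B} n.
Arguments flag_closedU {N B S T}.
Arguments flag_closed_Blt {N B} n.
Arguments flag_closed_Ble {N B} n.

Lemma AB_equiv_conj (E : fieldType) N deg (B : {set 'I_N}) (D D' : 'M[E]_N) :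
  AB_equiv deg B D D' ->
  exists g, [/\ g \in unitmx, forall S, flag_closed B S -> (EB E S *m g <= EB E S)%MS
              & D' = invmx g *m D *m g].
Proof.
case=> g [g_unit g_tri _ g_B ->]; exists g; split=> // S S_closed.
apply/stable_EBP => k l kS nz; apply: S_closed kS _ _; first exact: g_tri nz.
by move=> kB; apply: g_B kB nz.
Qed.

Section Criteria.
Variables (E : fieldType) (N : nat) (B : {set 'I_N}).
Implicit Types (D : 'M[E]_N) (T U K : {set 'I_N}).

Definition row_crit D T U K := ~~ (EB E U *m D <= EB E T *m D + EB E K)%MS.

Definition bd_in D T := (EB E T *m D :&: EB E B)%MS.

Definition hplus_crit D (x b : 'I_N) :=
  ~~ (bd_in D (B :|: [set k : 'I_N | (k <= x)%N]) <=
      bd_in D (B :|: [set k : 'I_N | (k < x)%N]) +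
      (kermx D :&: EB E [set k in B | (k < b)%N]) + EB E B *m D)%MS.

Lemma row_critE D T K (i : 'I_N) :
  (forall k l, k \in T -> l \notin K -> D i l != 0 -> D k l = 0) ->
  row_crit D T (i |: T) K = [exists l, (l \notin K) && (D i l != 0)].
Proof.
move=> col0; apply/idP/idP; last first.
  case/existsP => l /andP[lK nz]; apply/negP => le_i.
  have RHS_l0 : (EB E T *m D + EB E K <= EB E [set~ l])%MS.
    rewrite addsmx_sub EBS ?andbT; last first.
      by apply/subsetP => k kK; rewrite !inE; apply: contraNneq lK => <-.
    by apply/sub_EB_setC1P => k; rewrite mulEBl; case: ifP => // kT; apply: col0.
  have row_i : (row i D <= EB E (i |: T) *m D)%MS.
    by apply: (eq_row_sub i); rewrite row_mul rowEB setU11 -rowE.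
  move/sub_EB_setC1P: (submx_trans row_i (submx_trans le_i RHS_l0)) => /(_ 0).
  by rewrite mxE; apply/eqP.
apply: contraLR; rewrite negb_exists => /forallP noL; rewrite negbK.
apply/row_subP => k; rewrite row_mul rowEB; case: ifP => [/setU1P[-> | kT] | _]; last first.
- by rewrite mul0mx sub0mx.
- apply: submx_trans (addsmxSl _ _); apply: (eq_row_sub k).
  by rewrite row_mul rowEB kT -rowE.
- apply: submx_trans (addsmxSr _ _); apply/sub_EBP => k' l lK.
  by rewrite -rowE mxE; apply/eqP; move: (noL l); rewrite lK /= negbK.
Qed.

End Criteria.

Section Conjugation.
Variables (E : fieldType) (N : nat) (B : {set 'I_N}) (g D : 'M[E]_N).
Hypotheses (g_unit : g \in unitmx)
  (g_flag : forall S, flag_closed B S -> (EB E S *m g <= EB E S)%MS).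
Local Notation Dg := (invmx g *m D *m g).

Lemma capmx_mulg m1 m2 (X : 'M[E]_(m1, N)) (Y : 'M[E]_(m2, N)) :
  ((X :&: Y) *m g :=: X *m g :&: Y *m g)%MS.
Proof.
apply/eqmxP; rewrite capmxMr /=; set Z := (X *m g :&: Y *m g)%MS.
rewrite -[Z](mulmxKV g_unit) submxMr // sub_capmx.
rewrite -[X](mulmxK g_unit) -[Y](mulmxK g_unit).
by apply/andP; split; apply: submxMr; rewrite ?capmxSl ?capmxSr.
Qed.

Lemma EB_mulg S : flag_closed B S -> (EB E S *m g :=: EB E S)%MS.
Proof.
move=> S_closed; apply/eqmxP; rewrite -(mxrank_leqif_eq (g_flag S_closed)).
by rewrite mxrankMfree ?row_free_unit.
Qed.

Lemma EB_mulDg S : flag_closed B S -> (EB E S *m Dg :=: EB E S *m D *m g)%MS.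
Proof.
move=> S_closed; rewrite !mulmxA; apply/eqmxMr/eqmxMr.
have /(eqmxMr (invmx g)) := EB_mulg S_closed; rewrite mulmxK //.
exact: eqmx_sym.
Qed.

Lemma kermx_conj : (kermx Dg :=: kermx D *m g)%MS.
Proof.
apply/eqmxP/andP; split; last first.
  by rewrite sub_kermx !mulmxA mulmxK // mulmx_ker mul0mx.
set K := kermx Dg; have /eqP KDg0 : K *m Dg == 0 by rewrite -sub_kermx.
rewrite -[K](mulmxKV g_unit) submxMr // sub_kermx.
have -> : K *m invmx g *m D = K *m Dg *m invmx g by rewrite !mulmxA mulmxK.
by rewrite KDg0 mul0mx.
Qed.

Lemma img_conj : (Dg :=: D *m g)%MS.
Proof. by rewrite -mulmxA; apply: eqmxMfull; rewrite row_full_unit unitmx_inv. Qed.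

Lemma cap_eqmx_mulg m1 m2 m3 m4 (X' : 'M[E]_(m1, N)) (X : 'M[E]_(m2, N))
    (Y' : 'M[E]_(m3, N)) (Y : 'M[E]_(m4, N)) :
  (X' :=: X *m g)%MS -> (Y' :=: Y *m g)%MS -> (X' :&: Y' :=: (X :&: Y)%MS *m g)%MS.
Proof. by move=> eX eY; apply: eqmx_trans (cap_eqmx eX eY) (eqmx_sym (capmx_mulg _ _)). Qed.

Lemma adds_eqmx_mulg m1 m2 m3 m4 (X' : 'M[E]_(m1, N)) (X : 'M[E]_(m2, N))
    (Y' : 'M[E]_(m3, N)) (Y : 'M[E]_(m4, N)) :
  (X' :=: X *m g)%MS -> (Y' :=: Y *m g)%MS -> (X' + Y' :=: (X + Y)%MS *m g)%MS.
Proof. by move=> eX eY; apply: eqmx_trans (adds_eqmx eX eY) (eqmx_sym (addsmxMr _ _ _)). Qed.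

Lemma row_crit_conj T U K : flag_closed B T -> flag_closed B U -> flag_closed B K ->
  row_crit Dg T U K = row_crit D T U K.
Proof.
move=> T_closed U_closed K_closed; rewrite /row_crit EB_mulDg //.
rewrite (adds_eqmx_mulg (EB_mulDg T_closed) (eqmx_sym (EB_mulg K_closed))).
by rewrite submxMfree ?row_free_unit.
Qed.

Lemma Ipre_conj S : flag_closed B S -> (Ipre B Dg S :=: Ipre B D S *m g)%MS.
Proof.
move=> S_closed; have EB_B := eqmx_sym (EB_mulg flag_closedB).
apply: cap_eqmx_mulg (cap_eqmx_mulg img_conj EB_B).
apply: adds_eqmx_mulg (EB_mulDg flag_closedB).
exact: cap_eqmx_mulg kermx_conj (eqmx_sym (EB_mulg S_closed)).
Qed.

Lemma H_ess_conj : H_ess B Dg = H_ess B D.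
Proof.
apply/setP=> b; rewrite !inE; case: (b \in B) => //=.
rewrite !Ipre_conj; try exact: flag_closed_Ble; try exact: flag_closed_Blt.
by rewrite !submxMfree ?row_free_unit.
Qed.

Lemma bd_in_conj T : flag_closed B T -> (bd_in B Dg T :=: bd_in B D T *m g)%MS.
Proof.
move=> T_closed.
exact: cap_eqmx_mulg (EB_mulDg T_closed) (eqmx_sym (EB_mulg flag_closedB)).
Qed.

Lemma hplus_crit_conj x b : hplus_crit B Dg x b = hplus_crit B D x b.
Proof.
have closed_lt : flag_closed B (B :|: [set k : 'I_N | (k < x)%N]).
  exact: flag_closedU flag_closedB (flag_closed_lt x).
have closed_le : flag_closed B (B :|: [set k : 'I_N | (k <= x)%N]).
  exact: flag_closedU flag_closedB (flag_closed_le x).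
have cycles := cap_eqmx_mulg kermx_conj (eqmx_sym (EB_mulg (flag_closed_Blt b))).
rewrite /hplus_crit (bd_in_conj closed_le).
rewrite (adds_eqmx_mulg (adds_eqmx_mulg (bd_in_conj closed_lt) cycles) (EB_mulDg flag_closedB)).
by rewrite submxMfree ?row_free_unit.
Qed.

End Conjugation.

Section Equivalence.
Variables (E : fieldType) (N : nat) (deg : 'I_N -> int) (B : {set 'I_N}).
Variables D D' : 'M[E]_N.
Hypothesis DD' : AB_equiv deg B D D'.

Lemma row_crit_equiv T U K : flag_closed B T -> flag_closed B U -> flag_closed B K ->
  row_crit D' T U K = row_crit D T U K.
Proof. by have [g [g_unit g_flag ->]] := AB_equiv_conj DD'; apply: row_crit_conj. Qed.

Lemma H_ess_equiv : H_ess B D' = H_ess B D.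
Proof. by have [g [g_unit g_flag ->]] := AB_equiv_conj DD'; apply: H_ess_conj. Qed.

Lemma hplus_crit_equiv x b : hplus_crit B D' x b = hplus_crit B D x b.
Proof. by have [g [g_unit g_flag ->]] := AB_equiv_conj DD'; apply: hplus_crit_conj. Qed.

End Equivalence.

Section ElementaryOn.
Variables (E : fieldType) (N : nat) (S : {set 'I_N}) (D : 'M[E]_N).
Hypothesis D_elem : elem_on S D.

Lemma elem_row_uniq (i j j' : 'I_N) : i \in S -> j \in S -> j' \in S ->
  D i j != 0 -> D i j' != 0 -> j = j'.
Proof.
move=> iS jS j'S nz nz'; case: (D_elem.1 i iS) => [D0 | [j0 [_ _ D0]]].
  by rewrite D0 ?eqxx in nz.
have uniq0 k : k \in S -> D i k != 0 -> k = j0.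
  by move=> kS; apply: contraNeq => /(D0 k kS) ->.
by rewrite (uniq0 j) // (uniq0 j').
Qed.

Lemma elem_entry1 (i j : 'I_N) : i \in S -> j \in S -> D i j != 0 -> D i j = 1.
Proof.
move=> iS jS nz; case: (D_elem.1 i iS) => [D0 | [j0 [_ Dij0 D0]]].
  by rewrite D0 ?eqxx in nz.
by case: (eqVneq j j0) => [-> | ne]; last rewrite D0 ?eqxx in nz.
Qed.

Lemma elem_mulmx (s : 'rV[E]_N) (i j : 'I_N) : i \in S -> j \in S -> D i j != 0 ->
  (forall k, k \notin S -> s 0 k * D k j = 0) -> (s *m D) 0 j = s 0 i.
Proof.
move=> iS jS nz s0; rewrite mxE (bigD1 i) //= elem_entry1 // mulr1.
rewrite big1 ?addr0 // => k ki; case: (boolP (k \in S)) => [kS | /s0 //].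
case: (eqVneq (D k j) 0) => [-> | nzk]; first by rewrite mulr0.
by rewrite (D_elem.2 k i j) ?eqxx in ki.
Qed.

End ElementaryOn.

Section EssentialElements.
Variables (E : fieldType) (N : nat) (B : {set 'I_N}) (D : 'M[E]_N).
Local Notation Ble b := [set k in B | (k <= b)%N].
Local Notation Blt b := [set k in B | (k < b)%N].

Lemma sub_EB_Blt m (A : 'M[E]_(m, N)) (b : 'I_N) :
  (A <= EB E (Ble b))%MS -> (forall k, A k b = 0) -> (A <= EB E (Blt b))%MS.
Proof.
move=> /sub_EBP A0 Ab0; apply/sub_EBP => k l; case: (eqVneq l b) => [-> _ // | ne].
by rewrite !inE ltn_neqAle ne => lS; apply: A0; rewrite !inE.
Qed.

Lemma Ipre_S (S S' : {set 'I_N}) : S \subset S' -> (Ipre B D S <= Ipre B D S')%MS.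
Proof. by move=> sSS'; rewrite capmxS ?addsmxS ?capmxS ?EBS. Qed.

Lemma notin_H_ess (b : 'I_N) : (Ipre B D (Ble b) <= Ipre B D (Blt b))%MS -> b \notin H_ess B D.
Proof.
move=> le_b; rewrite inE negb_and negbK le_b Ipre_S ?orbT //.
by apply/subsetP => k; rewrite !inE => /andP[-> /ltnW].
Qed.

Lemma Ipre_sub_of_cycles (b : 'I_N) :
  (kermx D :&: EB E (Ble b) <= (kermx D :&: EB E (Blt b)) + EB E B *m D)%MS ->
  (Ipre B D (Ble b) <= Ipre B D (Blt b))%MS.
Proof. by move=> cyc; rewrite capmxS // addsmx_sub cyc addsmxSr. Qed.

End EssentialElements.

Section ElementaryDifferential.
Variables (E : fieldType) (N : nat) (B : {set 'I_N}) (D : 'M[E]_N).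
Hypotheses (D2_0 : D *m D = 0) (D_B : forall i j, i \in B -> D i j != 0 -> j \in B)
  (elemB : elem_on B D) (elemN : elem_on (~: B) D).

Local Notation P := (Pset B D).
Local Notation X := (Xset B D).

Lemma memPset p : p \in P ->
  [/\ p \in B, forall l, l \in B -> D p l = 0 & forall k, k \in B -> D k p = 0].
Proof.
rewrite !inE negb_or => /andP[/andP[nQ nR] pB]; rewrite pB /= in nQ nR.
split=> // l lB; apply/eqP.
  by apply: contraNT nQ => nz; apply/existsP; exists l; rewrite lB.
by apply: contraNT nR => nz; apply/existsP; exists l; rewrite lB.
Qed.

Lemma memXset x : x \in X -> x \notin B /\ forall l, l \notin B -> D x l = 0.
Proof.
rewrite !inE negb_or => /andP[/andP[nY _] xB]; rewrite xB /= in nY.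
split=> // l lB; apply/eqP; apply: contraNT nY => nz.
by apply/existsP; exists l; rewrite inE lB.
Qed.

Lemma notin_Xset k : k \notin B -> k \notin X ->
  (exists2 z, z \notin B & D k z != 0) \/ k \in Zset B D.
Proof.
move=> kB; rewrite !inE kB /= andbT negbK => /orP[/existsP[z] | kZ]; last by right.
by rewrite inE => /andP[zB nz]; left; exists z.
Qed.

Lemma row_Qset q r : q \in B -> r \in B -> D q r != 0 -> row q D = 'e_r.
Proof.
move=> qB rB nz; apply/rowP => l; rewrite !mxE eqxx /=.
case: (eqVneq l r) => [-> | ne]; first by rewrite (elem_entry1 elemB qB rB nz).
apply/eqP; rewrite mulr0n; apply: contraNT ne => nzl.
by rewrite (elem_row_uniq elemB qB (D_B qB nzl) rB nzl nz).
Qed.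

Lemma row_Pset p : p \in P -> row p D = 0.
Proof.
case/memPset => pB Dp0 _; apply/rowP => l; rewrite !mxE.
case: (boolP (l \in B)) => [/Dp0 // | lB].
by apply/eqP; apply: contraNT lB => /(D_B pB).
Qed.

Lemma EB_Rset_sub : (EB E (Rset B D) <= EB E B *m D)%MS.
Proof.
apply/row_subP => r; rewrite rowEB; case: ifP => [| _]; last exact: sub0mx.
rewrite inE => /andP[rB /existsP[q /andP[qB nz]]].
have row_qB : row q (EB E B) = 'e_q by rewrite rowEB qB.
by rewrite -(row_Qset qB rB nz) rowE -row_qB -row_mul row_sub.
Qed.

Lemma D_Zset_Pset z p : z \in Zset B D -> p \in P -> D z p = 0.
Proof.
rewrite inE => /andP[zB /existsP[y]]; rewrite inE => /andP[yB nz] /memPset[_ _ Dp0].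
have := congr1 (fun M : 'M[E]_N => M y p) D2_0.
have yB' : y \in ~: B by rewrite inE.
rewrite !mxE (bigD1 z) //= (elem_entry1 elemN yB' zB nz) mul1r big1 ?addr0 // => k kz.
case: (boolP (k \in B)) => [/Dp0 -> | kB]; first by rewrite mulr0.
case: (eqVneq (D y k) 0) => [-> | nzk]; first by rewrite mul0r.
by rewrite (elem_row_uniq elemN yB' _ zB nzk nz) ?inE ?eqxx in kz.
Qed.

Lemma D_Xset_Qset x q : x \in X -> q \in Qset B D -> D x q = 0.
Proof.
case/memXset => _ Dx0; rewrite inE => /andP[qB /existsP[r /andP[rB nz]]].
have s_B (k : 'I_N) : k \notin B -> row x D 0 k * D k r = 0.
  by move=> kB; rewrite mxE Dx0 ?mul0r.
by have := elem_mulmx elemB qB rB nz s_B; rewrite -row_mul D2_0 !mxE.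
Qed.

Lemma mulmx_Pset_coord m (M : 'M[E]_(m, N)) i p : p \in P ->
  (M *m D <= EB E B)%MS -> (M *m D) i p = \sum_(k in X) M i k * D k p.
Proof.
move=> pP /sub_EBP MD_B; have [_ _ Dp0] := memPset pP.
rewrite mxE (bigID (mem X)) /= addrC big1 ?add0r // => k kX.
case: (eqVneq (D k p) 0) => [-> | nz]; first by rewrite mulr0.
have kB : k \notin B by apply: contraNN nz => /Dp0 ->.
case: (notin_Xset kB kX) => [[z zB nzz] | kZ]; last by rewrite D_Zset_Pset ?eqxx in nz.
have s_B l : l \notin ~: B -> row i M 0 l * D l z = 0.
  rewrite inE negbK => lB; apply/eqP; rewrite mulf_eq0; apply/orP; right.
  by apply: contraNT zB => /(D_B lB).
have row_iz : row i (M *m D) 0 z = 0 by rewrite mxE MD_B.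
have := elem_mulmx elemN (_ : k \in ~: B) (_ : z \in ~: B) nzz s_B.
by rewrite -row_mul row_iz mxE !inE => /(_ kB zB) <-; rewrite mul0r.
Qed.

Lemma row_Rset r : r \in Rset B D -> row r D = 0.
Proof.
rewrite inE => /andP[rB /existsP[q /andP[qB nz]]].
by rewrite rowE -(row_Qset qB rB nz) -row_mul D2_0 row0.
Qed.

Lemma H_ess_sub_Pset : H_ess B D \subset P.
Proof.
apply/subsetP => b bH; have bB : b \in B by move: bH; rewrite inE => /andP[].
apply: contraLR bH => bNP; apply/notin_H_ess/Ipre_sub_of_cycles.
set A := (kermx D :&: EB E _)%MS.
have AD0 : A *m D = 0 by apply/eqP; rewrite -sub_kermx capmxSl.
have A_le : (A <= EB E [set k in B | (k <= b)%N])%MS by apply: capmxSr.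
have [bQ | bR] : b \in Qset B D \/ b \in Rset B D.
  by move: bNP; rewrite !inE bB /= andbT negbK => /orP.
- apply: submx_trans (addsmxSl _ _); rewrite sub_capmx capmxSl sub_EB_Blt // => k.
  move: bQ; rewrite inE => /andP[_ /existsP[r /andP[rB nz]]].
  have A_B : forall l, l \notin B -> row k A 0 l * D l r = 0.
    move=> l lB; have /sub_EBP A0 := A_le.
    by rewrite mxE A0 ?mul0r // inE (negbTE lB).
  have := elem_mulmx elemB bB rB nz A_B.
  by rewrite -row_mul AD0 row0 mxE => /esym; rewrite mxE.
- have b_bd : (EB E [set b] <= EB E B *m D)%MS.
    by apply: submx_trans EB_Rset_sub; rewrite EBS // sub1set.
  have EBb_D0 : EB E [set b] *m D = 0.
    apply/row_matrixP => k; rewrite row_mul rowEB row0.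
    by case: ifP => [/set1P -> | _]; rewrite ?mul0mx // -rowE row_Rset.
  rewrite -[A](subrK (A *m EB E [set b])) addmx_sub_adds //; last first.
    exact: submx_trans (submxMl _ _) b_bd.
  rewrite sub_capmx sub_kermx mulmxBl AD0 -mulmxA EBb_D0 mulmx0 subr0 eqxx /=.
  apply: sub_EB_Blt => [| k]; last by rewrite 2!mxE mulEBr set11 subrr.
  rewrite addmx_sub // eqmx_opp.
  by apply: submx_trans (submxMl _ _) _; rewrite EBS // sub1set inE bB /=.
Qed.

Lemma hplus_exists b : b \in H_ess B D -> exists2 x, x \in X & D x b != 0.
Proof.
move=> bH; have bP := subsetP H_ess_sub_Pset b bH; have [_ _ Db0] := memPset bP.
case: (boolP [exists x in X, D x b != 0]) => [/exists_inP[x] | noX]; first by exists x.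
suff : b \notin H_ess B D by rewrite bH.
apply: notin_H_ess; set V := Ipre B D _.
have /sub_addsmxP[[u1 u2] /= V_sum] :
  (V <= (kermx D :&: EB E [set k in B | (k <= b)%N]) + EB E B *m D)%MS by apply: capmxSl.
have /andP[V_D V_B] : (V <= D)%MS && (V <= EB E B)%MS by rewrite -sub_capmx capmxSr.
have bd_b0 : (EB E B *m D <= EB E [set~ b])%MS.
  by apply/sub_EB_setC1P => k; rewrite mulEBl; case: ifP => // /Db0.
have V_b0 : (V <= EB E [set~ b])%MS.
  have [T V_T] := submxP V_D; apply/sub_EB_setC1P => k.
  rewrite V_T mulmx_Pset_coord -?V_T // big1 // => x xX; apply/eqP; rewrite mulf_eq0.
  by apply/orP; right; apply: contraNT noX => nz; apply/exists_inP; exists x.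
set C := u1 *m _ in V_sum.
have C_cyc : (C <= kermx D :&: EB E [set k in B | (k <= b)%N])%MS by apply: submxMl.
have C_b0 : (C <= EB E [set~ b])%MS.
  have -> : C = V - u2 *m (EB E B *m D) by rewrite V_sum addrK.
  by rewrite addmx_sub // eqmx_opp (submx_trans (submxMl _ _) bd_b0).
rewrite sub_capmx [X in _ && X]sub_capmx V_D V_B andbT V_sum addmx_sub_adds ?submxMl //.
rewrite sub_capmx (submx_trans C_cyc (capmxSl _ _)) sub_EB_Blt //.
  exact: submx_trans C_cyc (capmxSr _ _).
exact/sub_EB_setC1P.
Qed.

Section HplusCriterion.
Variables (x : 'I_N) (b : 'I_N).
Hypothesis xX : x \in X.
Local Notation TL := (B :|: [set k : 'I_N | (k < x)%N]).
Local Notation TU := (B :|: [set k : 'I_N | (k <= x)%N]).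

Lemma row_Xset_sub_B : (row x D <= EB E B)%MS.
Proof. by have [_ Dx0] := memXset xX; apply/sub_EBP => k l /Dx0; rewrite mxE. Qed.

Lemma bd_in_le_sub : (bd_in B D TU <= bd_in B D TL + row x D)%MS.
Proof.
have [xB _] := memXset xX.
have /andP[V_img V_B] : (bd_in B D TU <= EB E TU *m D)%MS && (bd_in B D TU <= EB E B)%MS.
  by rewrite -sub_capmx.
have EB_TU : EB E TU = EB E TL + EB E [set x].
  apply/matrixP => i j; rewrite !mxE !inE.
  case: (i == j) => /=; last by rewrite addr0.
  case: (eqVneq i x) => [-> | ne]; first by rewrite (negbTE xB) leqnn ltnn add0r.
  have ne' : (i != x :> nat) := ne.
  by rewrite ltn_neqAle ne' addr0.
have EBx_D : (EB E [set x] *m D <= row x D)%MS.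
  apply/row_subP => k; rewrite row_mul rowEB.
  by case: ifP => [/set1P -> | _]; rewrite -?rowE ?mul0mx ?sub0mx.
have [Z V_Z] := submxP V_img; rewrite V_Z EB_TU mulmxDl mulmxDr addmx_sub_adds //.
  rewrite sub_capmx submxMl /=.
  have -> : Z *m (EB E TL *m D) = bd_in B D TU - Z *m (EB E [set x] *m D).
    by rewrite V_Z EB_TU mulmxDl mulmxDr addrK.
  rewrite addmx_sub // eqmx_opp; apply: submx_trans (submxMl _ _) _.
  exact: submx_trans EBx_D row_Xset_sub_B.
exact: submx_trans (submxMl _ _) EBx_D.
Qed.

Lemma row_Xset_sub_cycles : (forall p, p \in P -> (b <= p)%N -> D x p = 0) ->
  (row x D <= (kermx D :&: EB E [set k in B | (k < b)%N]) + EB E B *m D)%MS.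
Proof.
move=> noP; have [_ Dx0] := memXset xX; set Pl := [set l in P | (l < b)%N].
have split_w : row x D = row x D *m EB E Pl + row x D *m EB E (Rset B D).
  apply/rowP => l; rewrite [in RHS]mxE !mulEBr !mxE.
  case lR: (l \in Rset B D).
    by rewrite /Pl inE /Pset in_setD in_setU lR orbT /= add0r.
  rewrite addr0; case: ifP => // lNPl.
  case: (boolP (l \in B)) => [lB | /Dx0 //].
  case lQ: (l \in Qset B D); first exact: D_Xset_Qset.
  have lP : l \in P by rewrite /Pset in_setD in_setU lQ lR lB.
  by apply: noP => //; rewrite leqNgt; move: lNPl; rewrite /Pl inE lP /= => ->.
have EBPl_D : EB E Pl *m D = 0.
  apply/row_matrixP => k; rewrite row_mul rowEB row0.
  by case: ifP => [/setIdP[kP _] | _]; rewrite ?mul0mx // -rowE row_Pset.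
rewrite split_w addmx_sub_adds //; last exact: submx_trans (submxMl _ _) EB_Rset_sub.
rewrite sub_capmx sub_kermx -mulmxA EBPl_D mulmx0 eqxx /=.
apply: submx_trans (submxMl _ _) _; apply: EBS; apply/subsetP => l.
rewrite /Pl inE => /andP[lP lb]; have [lB _ _] := memPset lP.
by rewrite inE lB lb.
Qed.

Lemma bd_in_lt_col0 p : p \in P -> (forall y, y \in X -> D y p != 0 -> y = x) ->
  (bd_in B D TL <= EB E [set~ p])%MS.
Proof.
move=> pP X_p; have [xB _] := memXset xX.
have /andP[V_img V_B] : (bd_in B D TL <= EB E TL *m D)%MS && (bd_in B D TL <= EB E B)%MS.
  by rewrite -sub_capmx.
have [Z V_Z] := submxP V_img; rewrite V_Z mulmxA in V_B *.
apply/sub_EB_setC1P => k; rewrite mulmx_Pset_coord // big1 // => y yX.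
case: (eqVneq (D y p) 0) => [-> | nz]; first by rewrite mulr0.
by rewrite mulEBr (X_p y yX nz) !inE (negbTE xB) ltnn mul0r.
Qed.

End HplusCriterion.

Lemma hplus_critE x b :
  (forall y y' p, y \in X -> y' \in X -> p \in P -> D y p != 0 -> D y' p != 0 -> y = y') ->
  x \in X ->
  hplus_crit B D x b = [exists p : 'I_N, (b <= p)%N && ((p \in P) && (D x p != 0))].
Proof.
move=> X_uniq xX; have [xB _] := memXset xX.
have w_TU : (row x D <= bd_in B D (B :|: [set k : 'I_N | (k <= x)%N]))%MS.
  rewrite sub_capmx row_Xset_sub_B // andbT; apply: (eq_row_sub x).
  by rewrite row_mul rowEB !inE leqnn orbT -rowE.
apply/idP/idP; last first.
  case/existsP => p /and3P[bp pP nz]; apply/negP => le_w.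
  have RHS_p0 : (bd_in B D (B :|: [set k : 'I_N | (k < x)%N]) +
      (kermx D :&: EB E [set k in B | (k < b)%N]) + EB E B *m D <= EB E [set~ p])%MS.
    rewrite !addsmx_sub bd_in_lt_col0 //; last by move=> y yX /(X_uniq y x p yX xX pP)->.
    rewrite (submx_trans (capmxSr _ _)) ?EBS //=; last first.
      apply/subsetP => l; rewrite !inE => /andP[_ lb].
      by apply: contraTneq lb => ->; rewrite -leqNgt.
    have [_ _ Dp0] := memPset pP.
    by apply/sub_EB_setC1P => k; rewrite mulEBl; case: ifP => // /Dp0.
  have w_p0 : (row x D <= EB E [set~ p])%MS.
    exact: submx_trans w_TU (submx_trans le_w RHS_p0).
  by move/sub_EB_setC1P: w_p0 => /(_ 0); rewrite mxE; apply/eqP.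
apply: contraLR; rewrite negb_exists => /forallP noP; rewrite negbK.
have Dx_P0 p : p \in P -> (b <= p)%N -> D x p = 0.
  by move=> pP bp; apply/eqP; move: (noP p); rewrite bp pP negbK.
apply: submx_trans (bd_in_le_sub xX) _; rewrite addsmx_sub -addsmxA addsmxSl /=.
exact: submx_trans (row_Xset_sub_cycles xX Dx_P0) (addsmxSr _ _).
Qed.

End ElementaryDifferential.

Lemma upper_exists_eq (N : nat) (p1 p2 : pred 'I_N) :
  (forall j j', p1 j -> p1 j' -> j = j') -> (forall j j', p2 j -> p2 j' -> j = j') ->
  (forall j : 'I_N,
     [exists l : 'I_N, (j <= l)%N && p1 l] = [exists l : 'I_N, (j <= l)%N && p2 l]) ->
  p1 =1 p2.
Proof.
suff sub (q1 q2 : pred 'I_N) : (forall j j', q1 j -> q1 j' -> j = j') ->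
    (forall j : 'I_N,
       [exists l : 'I_N, (j <= l)%N && q1 l] = [exists l : 'I_N, (j <= l)%N && q2 l]) ->
    forall j, q1 j -> q2 j.
  move=> u1 u2 eq12 j; apply/idP/idP; first exact: sub.
  by apply: sub u2 _ j => k; rewrite eq12.
move=> u1 eq12 j q1j.
have /existsP[l /andP[jl q2l]] : [exists l : 'I_N, (j <= l)%N && q2 l].
  by rewrite -eq12; apply/existsP; exists j; rewrite leqnn.
have /existsP[l' /andP[ll' q1l']] : [exists l' : 'I_N, (l <= l')%N && q1 l'].
  by rewrite eq12; apply/existsP; exists l; rewrite leqnn.
rewrite (u1 _ _ q1l' q1j) in ll'.
by have /eqP <- : l == j by rewrite -val_eqE eqn_leq ll' jl.
Qed.

Section Support.
Variables (E : fieldType) (N : nat) (B : {set 'I_N}).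
Implicit Types (D : 'M[E]_N) (i j : 'I_N).

Definition elem_diff D :=
  [/\ D *m D = 0, forall i j, i \in B -> D i j != 0 -> j \in B & elem_restr B D].

Lemma elem_diff_equiv deg D0 D :
  MAB_diff deg B D0 -> AB_equiv deg B D0 D -> elem_restr B D -> elem_diff D.
Proof.
case=> _ D0_2 _ D0_B /AB_equiv_conj[g [g_unit g_flag ->]] D_elem; split=> //.
  by rewrite !mulmxA mulmxK // -(mulmxA (invmx g) D0) D0_2 mulmx0 mul0mx.
apply/stable_EBP; rewrite (EB_mulDg D0 g_unit g_flag flag_closedB).
exact: submx_trans (submxMr g (introT (stable_EBP _ _) D0_B)) (g_flag _ flag_closedB).
Qed.

Lemma row_crit_Bset D i j : elem_diff D -> i \in B ->
  row_crit D [set k in B | (k < i)%N] [set k in B | (k <= i)%N] [set l : 'I_N | (l < j)%N]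
  = [exists l : 'I_N, (j <= l)%N && (D i l != 0)].
Proof.
case=> _ D_B [[_ col_inj] _] iB.
have -> : [set k in B | (k <= i)%N] = i |: [set k in B | (k < i)%N].
  apply/setP => k; rewrite !inE leq_eqVlt; case: (eqVneq k i) => [-> | ne].
    by rewrite eqxx iB.
  by move: ne; rewrite -val_eqE => /negbTE ->.
rewrite row_critE; first by apply: eq_existsb => l; rewrite inE -leqNgt.
move=> k l; rewrite inE => /andP[kB ki] _ nz; apply/eqP; apply: contraTT ki => nz'.
by rewrite (col_inj k i l kB iB (D_B _ _ iB nz)) ?ltnn.
Qed.

Lemma row_crit_notBset D i j : elem_diff D -> i \notin B ->
  row_crit D (B :|: [set k : 'I_N | (k < i)%N]) (B :|: [set k : 'I_N | (k <= i)%N])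
      (B :|: [set l : 'I_N | (l < j)%N])
  = [exists l : 'I_N, (j <= l)%N && ((l \notin B) && (D i l != 0))].
Proof.
case=> _ D_B [_ [_ col_inj]] iB.
have -> : B :|: [set k : 'I_N | (k <= i)%N] = i |: (B :|: [set k : 'I_N | (k < i)%N]).
  apply/setP => k; rewrite !inE leq_eqVlt; case: (eqVneq k i) => [-> | ne].
    by rewrite !eqxx orbT.
  by move: ne; rewrite -val_eqE => /negbTE ->.
rewrite row_critE.
  by apply: eq_existsb => l; rewrite !inE negb_or -leqNgt; case: (l \in B); case: (j <= l)%N.
move=> k l; rewrite !inE negb_or -leqNgt => kT /andP[lB _] nz; apply/eqP.
apply: contraNT (lB) => nz'; case: (boolP (k \in B)) => [kB | kB]; first exact: D_B _ _ kB nz'.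
rewrite (negbTE kB) /= in kT.
by rewrite (col_inj k i l) ?inE // ltnn in kT.
Qed.

End Support.

Section SupportEq.
Variables (E : fieldType) (N : nat) (B : {set 'I_N}) (D1 D2 : 'M[E]_N).
Hypotheses (D1_elem : elem_diff B D1) (D2_elem : elem_diff B D2).
Hypothesis row_crit12 : forall T U K, flag_closed B T -> flag_closed B U -> flag_closed B K ->
  row_crit D1 T U K = row_crit D2 T U K.

Lemma support_eqB i j : i \in B -> (D1 i j != 0) = (D2 i j != 0).
Proof.
move=> iB.
have row_uniq (D : 'M[E]_N) : elem_diff B D -> forall l l', D i l != 0 -> D i l' != 0 -> l = l'.
  case=> _ D_B [elemB _] l l' nz nz'.
  exact: (elem_row_uniq elemB iB (D_B _ _ iB nz) (D_B _ _ iB nz') nz nz').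
apply: (upper_exists_eq (row_uniq _ D1_elem) (row_uniq _ D2_elem)) => {}j.
rewrite -(row_crit_Bset j D1_elem iB) -(row_crit_Bset j D2_elem iB) row_crit12 //.
all: first [exact: flag_closed_Blt | exact: flag_closed_Ble | exact: flag_closed_lt].
Qed.

Lemma support_eqN i j : i \notin B -> j \notin B -> (D1 i j != 0) = (D2 i j != 0).
Proof.
move=> iB jB.
have row_uniq (D : 'M[E]_N) : elem_diff B D ->
    forall l l', (l \notin B) && (D i l != 0) -> (l' \notin B) && (D i l' != 0) -> l = l'.
  case=> _ _ [_ elemN] l l' /andP[lB nz] /andP[l'B nz'].
  by apply: (elem_row_uniq elemN _ _ _ nz nz'); rewrite inE.
have := upper_exists_eq (row_uniq _ D1_elem) (row_uniq _ D2_elem) _ j; rewrite jB; apply.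
move=> j'; rewrite -(row_crit_notBset j' D1_elem iB) -(row_crit_notBset j' D2_elem iB).
rewrite row_crit12 //; apply: flag_closedU flag_closedB _.
all: first [exact: flag_closed_lt | exact: flag_closed_le].
Qed.

End SupportEq.

Lemma partition_eq (E : fieldType) (N : nat) (B : {set 'I_N}) (D1 D2 : 'M[E]_N) :
  (forall i j, i \in B -> (D1 i j != 0) = (D2 i j != 0)) ->
  (forall i j, i \notin B -> j \notin B -> (D1 i j != 0) = (D2 i j != 0)) ->
  [/\ Pset B D1 = Pset B D2, Qset B D1 = Qset B D2 & Rset B D1 = Rset B D2] /\
  [/\ Xset B D1 = Xset B D2, Yset B D1 = Yset B D2 & Zset B D1 = Zset B D2] /\
  (forall q r, bijQR B D1 q r = bijQR B D2 q r) /\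
  (forall y z, bijYZ B D1 y z = bijYZ B D2 y z).
Proof.
move=> suppB suppN.
have eQ : Qset B D1 = Qset B D2.
  apply/setP => i; rewrite !inE; case iB: (i \in B) => //=.
  by apply: eq_existsb => j; rewrite suppB.
have eR : Rset B D1 = Rset B D2.
  apply/setP => j; rewrite !inE; case: (j \in B) => //=; apply: eq_existsb => i.
  by case iB: (i \in B); rewrite //= suppB.
have eY : Yset B D1 = Yset B D2.
  apply/setP => i; rewrite !inE; case iB: (i \in B) => //=; apply: eq_existsb => j.
  by rewrite inE; case jB: (j \in B); rewrite //= suppN ?iB ?jB.
have eZ : Zset B D1 = Zset B D2.
  apply/setP => j; rewrite !inE; case jB: (j \in B) => //=; apply: eq_existsb => i.
  by rewrite inE; case iB: (i \in B); rewrite //= suppN ?iB ?jB.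
split; first by rewrite /Pset eQ eR.
split; first by rewrite /Xset eY eZ.
split=> a c; first by rewrite /bijQR; case aB: (a \in B); rewrite //= suppB.
by rewrite /bijYZ; case aB: (a \in B); case cB: (c \in B); rewrite //= suppN ?aB ?cB.
Qed.

Section NormalForms.
Variables (E : fieldType) (N : nat) (deg : 'I_N -> int) (B : {set 'I_N}).
Variables (D0 D0' D1 D2 : 'M[E]_N).
Hypotheses (M0 : MAB_diff deg B D0) (M0' : MAB_diff deg B D0').
Hypotheses (e00 : AB_equiv deg B D0 D0') (e1 : AB_equiv deg B D0 D1)
  (e2 : AB_equiv deg B D0' D2).

Lemma equiv_invariant (T : Type) (f : 'M[E]_N -> T) :
  (forall D D', AB_equiv deg B D D' -> f D' = f D) -> f D1 = f D2.
Proof. by move=> f_inv; rewrite (f_inv _ _ e1) (f_inv _ _ e2) (f_inv _ _ e00). Qed.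

Lemma elem_restr_partition_eq : elem_restr B D1 -> elem_restr B D2 ->
  [/\ Pset B D1 = Pset B D2, Qset B D1 = Qset B D2 & Rset B D1 = Rset B D2] /\
  [/\ Xset B D1 = Xset B D2, Yset B D1 = Yset B D2 & Zset B D1 = Zset B D2] /\
  (forall q r, bijQR B D1 q r = bijQR B D2 q r) /\
  (forall y z, bijYZ B D1 y z = bijYZ B D2 y z).
Proof.
move=> r1 r2; have d1 := elem_diff_equiv M0 e1 r1; have d2 := elem_diff_equiv M0' e2 r2.
have crit (T U K : {set 'I_N}) : flag_closed B T -> flag_closed B U -> flag_closed B K ->
    row_crit D1 T U K = row_crit D2 T U K.
  move=> cT cU cK.
  exact: (equiv_invariant (f := fun D => row_crit D T U K)
                          (fun D D' e => row_crit_equiv e cT cU cK)).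
exact: partition_eq (support_eqB d1 d2 crit) (support_eqN d1 d2 crit).
Qed.

Lemma quasi_elem_support_eq : quasi_elem B D1 -> quasi_elem B D2 ->
  forall x p, x \in Xset B D1 -> p \in Pset B D1 -> (D1 x p != 0) = (D2 x p != 0).
Proof.
move=> q1 q2; have [r1 _ row1 col1] := q1; have [r2 _ row2 col2] := q2.
have [D1_2 D1_B [eB1 eN1]] := elem_diff_equiv M0 e1 r1.
have [D2_2 D2_B [eB2 eN2]] := elem_diff_equiv M0' e2 r2.
have [[eP _ _] [[eX _ _] _]] := elem_restr_partition_eq r1 r2.
move=> x p xX pP; have xX2 : x \in Xset B D2 by rewrite -eX.
have := upper_exists_eq (p1 := fun l => (l \in Pset B D1) && (D1 x l != 0))
                        (p2 := fun l => (l \in Pset B D1) && (D2 x l != 0)) _ _ _ p.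
rewrite /= pP; apply.
- by move=> l l' /andP[lP nz] /andP[l'P nz']; apply: (row1 x l l' xX lP l'P nz nz').
- rewrite eP => l l' /andP[lP nz] /andP[l'P nz'].
  exact: (row2 x l l' xX2 lP l'P nz nz').
move=> b; rewrite -(hplus_critE D1_2 D1_B eB1 eN1 b col1 xX).
rewrite (equiv_invariant (f := fun D => hplus_crit B D x b)
                         (fun D D' e => hplus_crit_equiv e x b)).
by rewrite (hplus_critE D2_2 D2_B eB2 eN2 b col2 xX2) eP.
Qed.

End NormalForms.

Theorem corollary3p5 (E : fieldType) (N : nat) (deg : 'I_N -> int)
    (B : {set 'I_N}) (D0 D0' : 'M[E]_N) :
  MAB_diff deg B D0 -> MAB_diff deg B D0' -> AB_equiv deg B D0 D0' ->
  [/\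
   (* H(partial_0) is an invariant *)
   H_ess B D0 = H_ess B D0',
   (* P,Q,R,X,Y,Z and the bijections are invariants, and H is contained in P *)
   (forall D1 D2 : 'M[E]_N,
      AB_equiv deg B D0 D1 -> AB_equiv deg B D0' D2 ->
      elem_restr B D1 -> elem_restr B D2 ->
      [/\ Pset B D1 = Pset B D2, Qset B D1 = Qset B D2 & Rset B D1 = Rset B D2] /\
      [/\ Xset B D1 = Xset B D2, Yset B D1 = Yset B D2 & Zset B D1 = Zset B D2] /\
      [/\ (forall q r, bijQR B D1 q r = bijQR B D2 q r),
          (forall y z, bijYZ B D1 y z = bijYZ B D2 y z) &
          H_ess B D0 \subset Pset B D1]) &
   (* h_+ : H -> X is well defined, injective, and an invariant *)
   (forall D1 D2 : 'M[E]_N,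
      AB_equiv deg B D0 D1 -> AB_equiv deg B D0' D2 ->
      quasi_elem B D1 -> quasi_elem B D2 ->
      [/\ (forall b, b \in H_ess B D0 -> exists! x, hplus_rel B D1 b x),
          (forall b x, b \in H_ess B D0 -> hplus_rel B D1 b x = hplus_rel B D2 b x) &
          (forall b b' x, b \in H_ess B D0 -> b' \in H_ess B D0 ->
             hplus_rel B D1 b x -> hplus_rel B D1 b' x -> b = b')])].
Proof.
move=> M0 M0' e00; split; first by rewrite (H_ess_equiv e00).
  move=> D1 D2 e1 e2 r1 r2.
  have [PQR [XYZ [eQR eYZ]]] := elem_restr_partition_eq M0 M0' e00 e1 e2 r1 r2.
  have [D1_2 D1_B [eB1 _]] := elem_diff_equiv M0 e1 r1.
  do 2!split=> //; split=> //.
  by rewrite -(H_ess_equiv e1) H_ess_sub_Pset.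
move=> D1 D2 e1 e2 q1 q2; have [r1 _ row1 col1] := q1; have [r2 _ _ _] := q2.
have [_ [[eX _ _] _]] := elem_restr_partition_eq M0 M0' e00 e1 e2 r1 r2.
have [D1_2 D1_B [eB1 eN1]] := elem_diff_equiv M0 e1 r1.
have HP b : b \in H_ess B D0 -> b \in Pset B D1.
  by rewrite -(H_ess_equiv e1); apply/subsetP/H_ess_sub_Pset.
split.
- move=> b bH; have bH1 : b \in H_ess B D1 by rewrite (H_ess_equiv e1).
  have [x xX nz] := hplus_exists D1_2 D1_B eB1 eN1 bH1.
  exists x; split=> [| x' /andP[x'X nz']]; first by rewrite /hplus_rel xX.
  exact: (col1 x x' b xX x'X (HP b bH) nz nz').
- move=> b x bH; rewrite /hplus_rel -eX; case xX: (x \in Xset B D1) => //=.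
  exact: (quasi_elem_support_eq M0 M0' e00 e1 e2 q1 q2 xX (HP b bH)).
- move=> b b' x bH b'H /andP[xX nz] /andP[_ nz'].
  exact: (row1 x b b' xX (HP b bH) (HP b' b'H) nz nz').
Qed.
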